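(* Let $n\geq 3$ and let $L\cong\mathbf{2}^n$ be a Boolean lattice. Then $\operatorname{sdim}_M\bigl(G^c(L)\bigr)=2^n-2^{n-1}-1$.
   Context: For a bounded lattice $M$ with $0$, $Z^*(M)=\{a\in M\setminus\{0\}:\ a\wedge b=0 \text{ for some } b\neq 0\}$. The graph $G^c(M)$ has vertex set $Z^*(M)$, two distinct vertices $a,b$ adjacent iff $a\wedge b\neq 0$. For a connected graph $G$, a vertex $w$ strongly resolves $u,v$ if some shortest $u$–$w$ path contains $v$ or some shortest $v$–$w$ path contains $u$; a set $W$ is a strong resolving set if every pair of distinct vertices is strongly resolved by some vertex of $W$; $\operatorname{sdim}_M(G)$ is the minimum size of a strong resolving set. *)

From mathcomp Require Import all_boot all_order.
Set Implicit Arguments. Unset Strict Implicit. Unset Printing Implicit Defensive.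
Import Order.TTheory.
Local Open Scope order_scope.

Section Graph.
Variable T : finType.
Variables (V : {set T}) (e : rel T).

(* p is (the tail of) a u–w path in the graph: consecutive vertices adjacent,
   all vertices in V, ending at w; its length is size p. *)
Definition gpath (u w : T) (p : seq T) : Prop :=
  [/\ path e u p, all (fun x => x \in V) (u :: p) & last u p = w].

Definition shortest_path (u w : T) (p : seq T) : Prop :=
  gpath u w p /\ forall q, gpath u w q -> size p <= size q.

Definition connected_graph : Prop :=
  forall u w, u \in V -> w \in V -> exists p, gpath u w p.

Definition strongly_resolves (w u v : T) : Prop :=
  (exists p, shortest_path u w p /\ v \in u :: p) \/
  (exists p, shortest_path v w p /\ u \in v :: p).

Definition strong_resolving_set (W : {set T}) : Prop :=
  W \subset V /\
  forall u v, u \in V -> v \in V -> u != v ->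
    exists2 w, w \in W & strongly_resolves w u v.

Definition sdim_is (k : nat) : Prop :=
  (exists W, strong_resolving_set W /\ #|W| = k) /\
  (forall W, strong_resolving_set W -> k <= #|W|).
End Graph.

Section ZeroDivisorGraph.
Variables (d : Order.disp_t) (M : finTBLatticeType d).

Definition Zstar : {set M} :=
  [set a | (a != \bot) && [exists b, (b != \bot) && (a `&` b == \bot)]].

Definition Gc_adj : rel M := fun a b => (a != b) && (a `&` b != \bot).
End ZeroDivisorGraph.

From mathcomp Require Import all_boot all_order.
Set Implicit Arguments. Unset Strict Implicit. Unset Printing Implicit Defensive.
Import Order.TTheory.

(* Through f, Z^*(L) is the set of nonempty proper subsets A of {0,...,n-1}
   and two of them are adjacent iff they intersect.  For n >= 3 the graph has
   diameter 2 (two disjoint sets both meet some two-element set), so when u, v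
   are at distance 2 no vertex other than u and v lies beyond v on a shortest
   path from u: only u and v strongly resolve {u, v}.  A set and its complement
   are at distance 2, hence a strong resolving set meets each of the
   2^(n-1) - 1 complementary pairs.  Conversely the sets avoiding a fixed
   point i0 form a strong resolving set: two sets A, B containing i0 with
   B not included in A are resolved by B \ A, through the shortest path
   A - B - B \ A. *)

Section GraphFacts.
Variables (T : finType) (V : {set T}) (e : rel T).

Lemma gpath_nil u w : gpath V e u w [::] -> u = w.
Proof. by case. Qed.

Lemma gpath_start u w p : gpath V e u w p -> u \in V.
Proof. by case=> _ /andP[]. Qed.

Lemma gpath_end u w p : gpath V e u w p -> w \in V.
Proof. by case=> _ /allP Vp <-; apply/Vp/mem_last. Qed.

Lemma gpath_end_mem u w p : gpath V e u w p -> w \in u :: p.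
Proof. by case=> _ _ <-; apply: mem_last. Qed.

Lemma gpath_size_gt1 u w p : gpath V e u w p -> u != w -> ~~ e u w ->
  1 < size p.
Proof.
case: p => [|x [|//]] pth uw; first by rewrite (gpath_nil pth) eqxx in uw.
by case: pth => /= /andP[ux _] _ <-; rewrite ux.
Qed.

Lemma shortest_path_one u w : u \in V -> w \in V -> u != w -> e u w ->
  shortest_path V e u w [:: w].
Proof.
move=> Vu Vw uw euw; split=> [|[|//] /gpath_nil uw']; first by split; rewrite /= ?Vu ?Vw ?euw.
by rewrite uw' eqxx in uw.
Qed.

Lemma shortest_path_two u v w : u \in V -> v \in V -> w \in V ->
  e u v -> e v w -> u != w -> ~~ e u w -> shortest_path V e u w [:: v; w].
Proof.
move=> Vu Vv Vw euv evw uw euw; split; first by split; rewrite /= ?Vu ?Vv ?Vw ?euv ?evw.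
by move=> q /gpath_size_gt1; apply.
Qed.

Hypothesis diameter2 : forall u w, u \in V -> w \in V -> u != w -> ~~ e u w ->
  exists2 z, z \in V & e u z && e z w.

Lemma diameter2_shortest_path u w : u \in V -> w \in V ->
  exists p, shortest_path V e u w p /\ size p <= 2.
Proof.
move=> Vu Vw; have [<-|uw] := eqVneq u w.
  by exists [::]; split=> //; split=> //; split; rewrite /= ?Vu.
have [euw|neuw] := boolP (e u w); first by exists [:: w]; split; first exact: shortest_path_one.
have [z Vz /andP[euz ezw]] := diameter2 Vu Vw uw neuw.
by exists [:: z; w]; split; first exact: shortest_path_two.
Qed.

Lemma diameter2_connected : connected_graph V e.
Proof.
by move=> u w Vu Vw; have [p [[pth _] _]] := diameter2_shortest_path Vu Vw; exists p.
Qed.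

Lemma strongly_resolves_sym w u v :
  strongly_resolves V e w u v -> strongly_resolves V e w v u.
Proof. by case; [right | left]. Qed.

Lemma strongly_resolves_l u v : u \in V -> v \in V -> strongly_resolves V e u u v.
Proof.
move=> Vu Vv; right; have [p [sp _]] := diameter2_shortest_path Vv Vu.
by exists p; split; last exact: gpath_end_mem sp.1.
Qed.

Lemma strongly_resolves_r u v : u \in V -> v \in V -> strongly_resolves V e v u v.
Proof.
move=> Vu Vv; left; have [p [sp _]] := diameter2_shortest_path Vu Vv.
by exists p; split; last exact: gpath_end_mem sp.1.
Qed.

Lemma shortest_path_nonadj_end u v w p : u != v -> ~~ e u v ->
  shortest_path V e u w p -> v \in u :: p -> w = v.
Proof.
move=> uv neuv [pth minp]; rewrite inE eq_sym (negbTE uv) /=.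
have [q [[qth _] sq]] := diameter2_shortest_path (gpath_start pth) (gpath_end pth).
have := leq_trans (minp q qth) sq.
case: p pth {minp} => [|x [|y [|//]]] [/= epth _ <-] _ //; first by rewrite inE => /eqP.
move: epth; rewrite !inE => /andP[eux _] /orP[/eqP vx|/eqP //].
by move: neuv; rewrite vx eux.
Qed.

Lemma strong_resolving_set_nonadj W u v : strong_resolving_set V e W ->
  u \in V -> v \in V -> u != v -> ~~ e u v -> ~~ e v u -> (u \in W) || (v \in W).
Proof.
move=> [_ resW] Vu Vv uv neuv nevu.
have [w Ww [[p [sp vp]]|[p [sp up]]]] := resW u v Vu Vv uv.
  by rewrite -(shortest_path_nonadj_end uv neuv sp vp) Ww orbT.
by rewrite eq_sym in uv; rewrite -(shortest_path_nonadj_end uv nevu sp up) Ww.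
Qed.

End GraphFacts.

Section BooleanLattice.
Variables (T : finType) (d : Order.disp_t) (L : finTBLatticeType d)
  (f : L -> {set T}) (g : {set T} -> L).
Hypotheses (fK : cancel f g) (gK : cancel g f)
  (f_mono : forall x y : L, (f x \subset f y) = (x <= y)%O).

Local Notation V := (Zstar L).
Local Notation e := (@Gc_adj d L).

Lemma f_inj : injective f. Proof. exact: can_inj fK. Qed.

Lemma f_bot : f \bot%O = set0.
Proof. by apply/eqP; rewrite -subset0 -{1}(gK set0) f_mono le0x. Qed.

Lemma f_meet x y : f (x `&` y)%O = f x :&: f y.
Proof.
apply/eqP; rewrite eqEsubset subsetI !f_mono leIl leIr /=.
by rewrite -{1}(gK (f x :&: f y)) f_mono lexI -!f_mono gK subsetIl subsetIr.
Qed.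

Lemma meet_eq_bot x y : ((x `&` y)%O == \bot%O) = (f x :&: f y == set0).
Proof. by rewrite -f_meet -f_bot (inj_eq f_inj). Qed.

Lemma in_Zstar x : (x \in V) = (f x != set0) && (f x != setT).
Proof.
rewrite inE -(inj_eq f_inj) f_bot; case: eqP => //= _.
apply/existsP/idP => [[y /andP[y0 xy0]]|xT].
  apply: contra_neq y0 => fxT; apply: f_inj; rewrite f_bot; apply/eqP.
  by rewrite meet_eq_bot fxT setTI in xy0.
exists (g (~: f x)); rewrite meet_eq_bot gK setICr eqxx andbT.
by rewrite -(inj_eq f_inj) f_bot gK -(inj_eq (@setC_inj _)) setC0 setCK.
Qed.

Lemma Gc_adjE x y : e x y = (x != y) && (f x :&: f y != set0).
Proof. by rewrite /Gc_adj meet_eq_bot. Qed.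

Lemma Zstar_neq0 x : x \in V -> f x != set0.
Proof. by rewrite in_Zstar => /andP[]. Qed.

Hypothesis T_gt2 : 2 < #|T|.

Lemma Gc_diameter2 u w : u \in V -> w \in V -> u != w ->
  ~~ e u w -> exists2 z, z \in V & e u z && e z w.
Proof.
move=> Vu Vw uw; rewrite Gc_adjE uw negbK => /eqP uw0.
have [a ua] := set0Pn _ (Zstar_neq0 Vu); have [b wb] := set0Pn _ (Zstar_neq0 Vw).
have disj c : c \in f u -> c \in f w -> False.
  by move=> cu cw; move: (in_set0 c); rewrite -uw0 inE cu cw.
exists (g [set a; b]).
  rewrite in_Zstar gK; apply/andP; split; first by apply/set0Pn; exists a; exact: set21.
  apply: contraTneq T_gt2 => abT; rewrite -cardsT -abT cards2 -leqNgt.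
  by case: (a != b).
rewrite !Gc_adjE gK; apply/andP; split; apply/andP; split.
- by apply/eqP => uab; apply: (disj b _ wb); rewrite uab gK set22.
- by apply/set0Pn; exists a; rewrite inE ua set21.
- by apply/eqP => abw; apply: (disj a ua); rewrite -abw gK set21.
by apply/set0Pn; exists b; rewrite inE set22 wb.
Qed.

Lemma Zstar_compl x : x \in V -> g (~: f x) \in V.
Proof.
rewrite !in_Zstar gK -[~: f x == set0](inj_eq (@setC_inj _)) setCK setC0.
by rewrite -[~: f x == setT](inj_eq (@setC_inj _)) setCK setCT andbC.
Qed.

Lemma compl_neq x : x \in V -> x != g (~: f x).
Proof.
move/Zstar_neq0/set0Pn=> [a xa]; apply/eqP => xc.
by move: (xa); rewrite {1}xc gK inE xa.
Qed.

Lemma compl_nonadj x : ~~ e x (g (~: f x)) /\ ~~ e (g (~: f x)) x.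
Proof. by rewrite !Gc_adjE gK setICr setIC setICr eqxx !andbF. Qed.

Lemma strong_resolving_set_compl W x :
  strong_resolving_set V e W -> x \in V -> (x \in W) || (g (~: f x) \in W).
Proof.
move=> resW Vx; have [nexc necx] := compl_nonadj x.
apply: strong_resolving_set_nonadj resW Vx (Zstar_compl Vx) (compl_neq Vx) nexc necx.
exact: Gc_diameter2.
Qed.

Section Avoiding.
Variable i0 : T.

Definition Zstar_avoiding : {set L} := [set x in V | i0 \notin f x].

Lemma in_Zstar_avoiding x : (x \in Zstar_avoiding) = (x \in V) && (i0 \notin f x).
Proof. by rewrite inE. Qed.

Lemma diff_in_Zstar_avoiding u v : i0 \in f u -> ~~ (f v \subset f u) ->
  g (f v :\: f u) \in Zstar_avoiding.
Proof.
move=> ui0 vu; rewrite in_Zstar_avoiding in_Zstar gK setD_eq0 vu !inE ui0 /= andbT.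
by apply/eqP=> /setP/(_ i0); rewrite !inE ui0.
Qed.

Lemma diff_strongly_resolves u v : u \in V -> v \in V ->
  i0 \in f u -> i0 \in f v -> ~~ (f v \subset f u) ->
  strongly_resolves V e (g (f v :\: f u)) u v.
Proof.
move=> Vu Vv ui0 vi0 vu.
move: (diff_in_Zstar_avoiding ui0 vu); rewrite in_Zstar_avoiding gK => /andP[Vw wi0].
have common_i0 x y : i0 \in f x -> i0 \notin f y -> x != y.
  by move=> xi yi; apply: contraNneq yi => <-.
left; exists [:: v; g (f v :\: f u)]; split; last by rewrite !inE eqxx orbT.
apply: shortest_path_two; rewrite ?Gc_adjE ?gK //.
- rewrite (contraNneq _ vu) => [|->] //=.
  by apply/set0Pn; exists i0; rewrite inE ui0.
- by rewrite common_i0 ?gK //= setIDA setIid setD_eq0.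
- by apply: common_i0; rewrite ?gK.
by rewrite setDE setICA setICr setI0 eqxx andbF.
Qed.

Lemma Zstar_avoiding_resolving : strong_resolving_set V e Zstar_avoiding.
Proof.
have diam := Gc_diameter2.
split=> [|u v Vu Vv uv]; first by apply/subsetP => x; rewrite in_Zstar_avoiding => /andP[].
have [Au|nAu] := boolP (u \in Zstar_avoiding).
  by exists u; last exact: strongly_resolves_l diam _ _ Vu Vv.
have [Av|nAv] := boolP (v \in Zstar_avoiding).
  by exists v; last exact: strongly_resolves_r diam _ _ Vu Vv.
move: nAu nAv; rewrite !in_Zstar_avoiding Vu Vv /= !negbK => ui0 vi0.
have [vu|nvu] := boolP (f v \subset f u); last first.
  exists (g (f v :\: f u)); first exact: diff_in_Zstar_avoiding.
  exact: diff_strongly_resolves.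
have nuv : ~~ (f u \subset f v).
  by apply: contra uv => uv'; apply/eqP/f_inj/eqP; rewrite eqEsubset uv' vu.
exists (g (f u :\: f v)); first exact: diff_in_Zstar_avoiding.
exact/strongly_resolves_sym/diff_strongly_resolves.
Qed.

Lemma card_Zstar_avoiding : #|Zstar_avoiding| = 2 ^ #|T|.-1 - 1.
Proof.
have -> : Zstar_avoiding = g @: (powerset [set~ i0] :\ set0).
  apply/setP => x; rewrite -{2}[x]fK (mem_imset _ _ (can_inj gK)).
  rewrite in_Zstar_avoiding in_Zstar !inE subsetC sub1set inE -andbA.
  have [nxi0|_] := boolP (i0 \notin f x); rewrite ?andbT ?andbF //.
  suff -> : f x != setT by rewrite andbT.
  by apply: contraNneq nxi0 => ->; rewrite inE.
rewrite card_imset; last exact: can_inj gK.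
have := cardsD1 set0 (powerset [set~ i0]).
by rewrite card_powerset cardsC1 powersetE sub0set add1n => ->; rewrite subn1.
Qed.

Lemma strong_resolving_set_card_ge W :
  strong_resolving_set V e W -> #|Zstar_avoiding| <= #|W|.
Proof.
move=> resW; pose h x := if x \in W then x else g (~: f x).
have h_inj : {in Zstar_avoiding &, injective h}.
  move=> x y; rewrite !in_Zstar_avoiding => /andP[_ xi0] /andP[_ yi0]; rewrite /h.
  case: ifP; case: ifP => _ _ hxy //.
  - by move: xi0; rewrite hxy gK inE negbK (negbTE yi0).
  - by move: yi0; rewrite -hxy gK inE negbK (negbTE xi0).
  by apply/f_inj/setC_inj; rewrite -[~: f x]gK hxy gK.
rewrite -(card_in_imset h_inj); apply/subset_leq_card/subsetP => _ /imsetP[x Ax ->].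
move: Ax; rewrite in_Zstar_avoiding /h => /andP[Vx _]; case: ifP => // /negbT.
by case/orP: (strong_resolving_set_compl resW Vx) => ->.
Qed.

End Avoiding.
End BooleanLattice.

Theorem corollary3p21 (n : nat) (d : Order.disp_t) (L : finTBLatticeType d)
  (f : L -> {set 'I_n}) :
  3 <= n ->
  bijective f ->
  (forall x y : L, (f x \subset f y) = (x <= y)%O) ->
  connected_graph (Zstar L) (@Gc_adj d L) /\
  sdim_is (Zstar L) (@Gc_adj d L) (2 ^ n - 2 ^ (n - 1) - 1).
Proof.
move=> n_ge3 [g fK gK] f_mono.
have I_gt2 : 2 < #|'I_n| by rewrite card_ord.
have n_gt0 : 0 < n := ltnW (ltnW n_ge3).
pose i0 : 'I_n := Ordinal n_gt0.
split; first exact/diameter2_connected/(Gc_diameter2 fK gK f_mono I_gt2).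
have -> : 2 ^ n - 2 ^ (n - 1) - 1 = #|Zstar_avoiding f i0|.
  rewrite (card_Zstar_avoiding fK gK f_mono) card_ord !subn1.
  by rewrite -[in 2 ^ n](prednK n_gt0) expnS mul2n -addnn addnK.
split; first by exists (Zstar_avoiding f i0); split; first exact: Zstar_avoiding_resolving.
exact: strong_resolving_set_card_ge.
Qed.
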